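(* The following quantifier-free set theories are all non-convex: $\mathsf{MLSS}$ ($\mathsf{MLS}$ extended with literals $x=\{y\}$), $\mathsf{MLSP}$ ($\mathsf{MLS}$ extended with literals $x=\mathcal{P}(y)$), $\mathsf{MLSSP}$ ($\mathsf{MLS}$ extended with both), $\mathsf{MLSU}$ ($\mathsf{MLS}$ extended with literals $x=\bigcup y$), $\mathsf{MLS}\times$ ($\mathsf{MLS}$ extended with the Cartesian product $y\times z$), $\mathsf{MLS}\otimes$ ($\mathsf{MLS}$ extended with the unordered Cartesian product $y\otimes z$), $\mathsf{BST}\times$ and $\mathsf{BST}\otimes$ (Boolean set theory $\mathsf{BST}$ extended with the Cartesian product, respectively the unordered Cartesian product).
   Context: $\mathsf{MLS}$ is the quantifier-free propositional closure of atoms $x=\varnothing$, $x=y$, $x\subseteq y$, $x\in y$, $x=y\setminus z$, $x=y\cup z$, $x=y\cap z$ over set variables. $\mathsf{BST}$ consists of conjunctions of literals of the forms $s=\varnothing$, $s\neq\varnothing$, $s\cap t=\varnothing$, $s\cap t\neq\varnothing$, $s\subseteq t$, $s\not\subseteq t$, $s=t$, $s\neq t$, where $s,t$ are terms built from set variables with $\cup,\cap,\setminus$ (no membership). Formulae are interpreted by set assignments (maps from finitely many set variables into the von Neumann universe) with the usual meanings; $\mathcal{P}$ is powerset, $\bigcup y$ is the union of the members of $y$, $\times$ is the Cartesian product of ordered pairs, and $y\otimes z=\{\{a,b\}\mid a\in y,\ b\in z\}$. A theory is convex if for every conjunction of its literals $\psi$ and every finite nonempty disjunction $\bigvee_i x_i=y_i$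 of equalities, whenever every set assignment satisfying $\psi$ satisfies the disjunction, some single disjunct $x_i=y_i$ is satisfied by every set assignment satisfying $\psi$. *)

(* A model of the set-theoretic universe: Aczel's
   well-founded trees ("sets as trees"), with extensional equality eqV and
   membership memV. *)
From Stdlib Require Import List.
Import ListNotations.

Inductive V : Type := sup (A : Type) (f : A -> V).

Definition idx (x : V) : Type := match x with sup A _ => A end.
Definition elt (x : V) : idx x -> V := match x with sup _ f => f end.

Fixpoint eqV (x y : V) {struct x} : Prop :=
  match x, y with
  | sup A f, sup B g =>
      (forall a, exists b, eqV (f a) (g b)) /\ (forall b, exists a, eqV (f a) (g b))
  end.

Definition memV (x y : V) : Prop := exists b : idx y, eqV x (elt y b).

Definition subV (x y : V) : Prop := forall z, memV z x -> memV z y.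

Definition emptyV : V := sup False (fun e => match e with end).
Definition singV (y : V) : V := sup unit (fun _ => y).
Definition upairV (a b : V) : V := sup bool (fun t => if t then a else b).
Definition opairV (a b : V) : V := upairV (singV a) (upairV a b).
Definition unionV (y z : V) : V :=
  sup (idx y + idx z) (fun s => match s with inl a => elt y a | inr b => elt z b end).
Definition interV (y z : V) : V :=
  sup {a : idx y | memV (elt y a) z} (fun s => elt y (proj1_sig s)).
Definition diffV (y z : V) : V :=
  sup {a : idx y | ~ memV (elt y a) z} (fun s => elt y (proj1_sig s)).
Definition powV (y : V) : V :=
  sup (idx y -> Prop) (fun P => sup {a : idx y | P a} (fun s => elt y (proj1_sig s))).
Definition bigunionV (y : V) : V :=
  sup {a : idx y & idx (elt y a)} (fun s => elt (elt y (projT1 s)) (projT2 s)).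
Definition prodV (y z : V) : V :=
  sup (idx y * idx z) (fun p => opairV (elt y (fst p)) (elt z (snd p))).
Definition uprodV (y z : V) : V :=
  sup (idx y * idx z) (fun p => upairV (elt y (fst p)) (elt z (snd p))).

Definition assignment := nat -> V.

Inductive atom : Type :=
| AEmpty  (x : nat)
| AEq     (x y : nat)
| ASub    (x y : nat)
| AMem    (x y : nat)
| ADiff   (x y z : nat)
| AUnion  (x y z : nat)
| AInter  (x y z : nat)
| ASingle (x y : nat)
| APow    (x y : nat)
| ABigU   (x y : nat)
| AProd   (x y z : nat)
| AUProd  (x y z : nat).

Definition sat_atom (s : assignment) (a : atom) : Prop :=
  match a with
  | AEmpty x => eqV (s x) emptyV
  | AEq x y => eqV (s x) (s y)
  | ASub x y => subV (s x) (s y)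
  | AMem x y => memV (s x) (s y)
  | ADiff x y z => eqV (s x) (diffV (s y) (s z))
  | AUnion x y z => eqV (s x) (unionV (s y) (s z))
  | AInter x y z => eqV (s x) (interV (s y) (s z))
  | ASingle x y => eqV (s x) (singV (s y))
  | APow x y => eqV (s x) (powV (s y))
  | ABigU x y => eqV (s x) (bigunionV (s y))
  | AProd x y z => eqV (s x) (prodV (s y) (s z))
  | AUProd x y z => eqV (s x) (uprodV (s y) (s z))
  end.

Record mls_ext : Type := { e_single : bool; e_pow : bool; e_bigu : bool;
                           e_prod : bool; e_uprod : bool }.

Definition atom_ok (E : mls_ext) (a : atom) : bool :=
  match a with
  | ASingle _ _ => e_single E
  | APow _ _ => e_pow E
  | ABigU _ _ => e_bigu E
  | AProd _ _ _ => e_prod E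
  | AUProd _ _ _ => e_uprod E
  | _ => true
  end.

Definition mlit := (bool * atom)%type.
Definition sat_mlit (s : assignment) (l : mlit) : Prop :=
  if fst l then sat_atom s (snd l) else ~ sat_atom s (snd l).

Inductive bterm : Type :=
| TVar (x : nat)
| TUnion (s t : bterm)
| TInter (s t : bterm)
| TDiff (s t : bterm)
| TProd (s t : bterm)
| TUProd (s t : bterm).

Fixpoint eval (s : assignment) (t : bterm) : V :=
  match t with
  | TVar x => s x
  | TUnion a b => unionV (eval s a) (eval s b)
  | TInter a b => interV (eval s a) (eval s b)
  | TDiff a b => diffV (eval s a) (eval s b)
  | TProd a b => prodV (eval s a) (eval s b)
  | TUProd a b => uprodV (eval s a) (eval s b)
  end.

Fixpoint bterm_ok (prod uprod : bool) (t : bterm) : bool :=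
  match t with
  | TVar _ => true
  | TUnion a b | TInter a b | TDiff a b => bterm_ok prod uprod a && bterm_ok prod uprod b
  | TProd a b => prod && bterm_ok prod uprod a && bterm_ok prod uprod b
  | TUProd a b => uprod && bterm_ok prod uprod a && bterm_ok prod uprod b
  end.

Inductive batom : Type :=
| BEmpty (s : bterm)
| BDisj  (s t : bterm)
| BSub   (s t : bterm)
| BEq    (s t : bterm).

Definition sat_batom (σ : assignment) (a : batom) : Prop :=
  match a with
  | BEmpty s => eqV (eval σ s) emptyV
  | BDisj s t => eqV (interV (eval σ s) (eval σ t)) emptyV
  | BSub s t => subV (eval σ s) (eval σ t)
  | BEq s t => eqV (eval σ s) (eval σ t)
  end.

Definition batom_ok (prod uprod : bool) (a : batom) : bool :=
  match a with
  | BEmpty s => bterm_ok prod uprod s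
  | BDisj s t | BSub s t | BEq s t => bterm_ok prod uprod s && bterm_ok prod uprod t
  end.

Definition blit := (bool * batom)%type.
Definition sat_blit (σ : assignment) (l : blit) : Prop :=
  if fst l then sat_batom σ (snd l) else ~ sat_batom σ (snd l).

Definition convex {L : Type} (ok : L -> bool) (sat : assignment -> L -> Prop) : Prop :=
  forall (psi : list L) (eqs : list (nat * nat)),
    (forall l, In l psi -> ok l = true) ->
    eqs <> [] ->
    (forall σ : assignment, (forall l, In l psi -> sat σ l) ->
        exists p, In p eqs /\ eqV (σ (fst p)) (σ (snd p))) ->
    exists p, In p eqs /\
      forall σ : assignment, (forall l, In l psi -> sat σ l) -> eqV (σ (fst p)) (σ (snd p)).

Definition mls_convex (E : mls_ext) : Prop :=
  convex (fun l : mlit => atom_ok E (snd l)) sat_mlit.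
Definition bst_convex (prod uprod : bool) : Prop :=
  convex (fun l : blit => batom_ok prod uprod (snd l)) sat_blit.

Definition MLSS  := {| e_single := true;  e_pow := false; e_bigu := false; e_prod := false; e_uprod := false |}.
Definition MLSP  := {| e_single := false; e_pow := true;  e_bigu := false; e_prod := false; e_uprod := false |}.
Definition MLSSP := {| e_single := true;  e_pow := true;  e_bigu := false; e_prod := false; e_uprod := false |}.
Definition MLSU  := {| e_single := false; e_pow := false; e_bigu := true;  e_prod := false; e_uprod := false |}.
Definition MLSx  := {| e_single := false; e_pow := false; e_bigu := false; e_prod := true;  e_uprod := false |}.
Definition MLSo  := {| e_single := false; e_pow := false; e_bigu := false; e_prod := false; e_uprod := true |}.

(* Each non-convexity is witnessed by a conjunction all of whose models
   satisfy one of two variable equalities, plus two models each violating one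
   of them.  Writing x, y, z for the variables 0, 1, 2: in MLSS, MLSP, MLSSP
   and MLSU, the literals x = ∅, z ⊆ y and a definition of y as {∅} (y = {x},
   y = P(x), or ⋃y = x with y ≠ ∅) force z = x or z = y, and both z = ∅ and
   z = {∅} give models.  In the product theories, x = ∅ and y × z = ∅ (resp.
   y ⊗ z; written x = y × z in MLS) force y = x or z = x, while either factor
   alone may be {∅}. *)
From Stdlib Require Import List Classical.
Import ListNotations.

Lemma eqV_refl (x : V) : eqV x x.
Proof. induction x as [A f IH]; split; intros a; exists a; apply IH. Qed.

Lemma eqV_sym (x y : V) : eqV x y -> eqV y x.
Proof.
  revert y; induction x as [A f IH]; intros [B g] [Hfg Hgf]; split.
  - intros b; destruct (Hgf b) as [a Hab]; exists a; apply IH, Hab.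
  - intros a; destruct (Hfg a) as [b Hab]; exists b; apply IH, Hab.
Qed.

Definition is_empty (u : V) : Prop := idx u -> False.

Definition is_one (u : V) : Prop := inhabited (idx u) /\ forall i, is_empty (elt u i).

Definition oneV : V := singV emptyV.

Lemma is_empty_eqV (u v : V) : eqV u v -> is_empty u -> is_empty v.
Proof. destruct u, v; intros [_ Hvu] Hu b; destruct (Hvu b) as [a _]; exact (Hu a). Qed.

Lemma empty_eqV (u v : V) : is_empty u -> is_empty v -> eqV u v.
Proof. destruct u, v; intros Hu Hv; split; intros a; [destruct (Hu a) | destruct (Hv a)]. Qed.

Lemma eqV_emptyV (u : V) : eqV u emptyV <-> is_empty u.
Proof.
  split; intros Hu.
  - apply (is_empty_eqV emptyV); [apply eqV_sym, Hu | intros []].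
  - apply empty_eqV; [exact Hu | intros []].
Qed.

Lemma is_empty_emptyV : is_empty emptyV.
Proof. intros []. Qed.

Lemma is_one_eqV (u v : V) : eqV u v -> is_one u -> is_one v.
Proof.
  destruct u as [A f], v as [B g]; intros [Hfg Hgf] [[a] Hf]; split.
  - destruct (Hfg a) as [b _]; exact (inhabits b).
  - intros b; destruct (Hgf b) as [a' Hab]; exact (is_empty_eqV _ _ Hab (Hf a')).
Qed.

Lemma one_eqV (u v : V) : is_one u -> is_one v -> eqV u v.
Proof.
  destruct u as [A f], v as [B g]; intros [[a] Hf] [[b] Hg]; split.
  - intros a'; exists b; apply empty_eqV; auto.
  - intros b'; exists a; apply empty_eqV; auto.
Qed.

Lemma is_one_oneV : is_one oneV.
Proof. split; [exact (inhabits tt) | intros i; exact is_empty_emptyV]. Qed.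

Lemma not_is_empty_inhabited (u : V) : ~ is_empty u -> inhabited (idx u).
Proof. intros Hu; apply NNPP; intros Hno; apply Hu; intros i; exact (Hno (inhabits i)). Qed.

Lemma sub_one_cases (x y : V) : is_one x -> subV y x -> is_empty y \/ is_one y.
Proof.
  intros [_ Hx] Hyx.
  destruct (classic (is_empty y)) as [Hy | Hy]; [left; exact Hy | right].
  split; [exact (not_is_empty_inhabited y Hy) |].
  intros i; destruct (Hyx (elt y i) (ex_intro _ i (eqV_refl _))) as [b Hb].
  exact (is_empty_eqV _ _ (eqV_sym _ _ Hb) (Hx b)).
Qed.

Lemma is_one_singV (e : V) : is_empty e -> is_one (singV e).
Proof. intros He; split; [exact (inhabits tt) | intros i; exact He]. Qed.

Lemma is_one_powV (e : V) : is_empty e -> is_one (powV e).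
Proof.
  intros He; split; [exact (inhabits (fun _ => True)) |].
  intros P [a _]; exact (He a).
Qed.

Lemma is_one_of_bigunionV (u : V) : is_empty (bigunionV u) -> ~ is_empty u -> is_one u.
Proof.
  intros Hbig Hu; split; [exact (not_is_empty_inhabited u Hu) |].
  intros i j; exact (Hbig (existT _ i j)).
Qed.

(* [prodV] and [uprodV] are definitionally [pair_productV opairV] and
   [pair_productV upairV]. *)
Definition pair_productV (pair : V -> V -> V) (y z : V) : V :=
  sup (idx y * idx z) (fun p => pair (elt y (fst p)) (elt z (snd p))).

Lemma is_empty_pair_productV (pair : V -> V -> V) (y z : V) :
  is_empty (pair_productV pair y z) <-> is_empty y \/ is_empty z.
Proof.
  split.
  - intros Hyz; destruct (classic (is_empty y)) as [Hy | Hy]; [left; exact Hy | right].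
    destruct (not_is_empty_inhabited y Hy) as [i]; intros j; exact (Hyz (i, j)).
  - intros [Hy | Hz] [i j]; [exact (Hy i) | exact (Hz j)].
Qed.

Lemma not_convex_of_two_disjuncts {L : Type} (ok : L -> bool)
    (sat : assignment -> L -> Prop) (psi : list L) (p q : nat * nat) :
  forallb ok psi = true ->
  (forall σ, Forall (sat σ) psi ->
     eqV (σ (fst p)) (σ (snd p)) \/ eqV (σ (fst q)) (σ (snd q))) ->
  (exists σ, Forall (sat σ) psi /\ ~ eqV (σ (fst p)) (σ (snd p))) ->
  (exists σ, Forall (sat σ) psi /\ ~ eqV (σ (fst q)) (σ (snd q))) ->
  ~ convex ok sat.
Proof.
  intros Hok Hcover [σp [Hσp Hp]] [σq [Hσq Hq]] Hconvex.
  destruct (Hconvex psi [p; q]) as [r [[<- | [<- | []]] Hr]].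
  - apply forallb_forall, Hok.
  - discriminate.
  - intros σ Hσ; destruct (Hcover σ (proj2 (Forall_forall _ _) Hσ)) as [H | H];
      [exists p | exists q]; simpl; auto.
  - apply Hp, Hr, Forall_forall, Hσp.
  - apply Hq, Hr, Forall_forall, Hσq.
Qed.

Definition assign3 (a b c : V) : assignment :=
  fun n => match n with 0 => a | 1 => b | _ => c end.

Lemma mls_not_convex_of_one_definition (E : mls_ext) (def : list mlit) :
  forallb (fun l => atom_ok E (snd l)) def = true ->
  (forall σ, is_empty (σ 0) -> Forall (sat_mlit σ) def -> is_one (σ 1)) ->
  (forall c, Forall (sat_mlit (assign3 emptyV oneV c)) def) ->
  ~ mls_convex E.
Proof.
  intros Hok Hdef Hwitness.
  apply (not_convex_of_two_disjuncts _ _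
           ((true, AEmpty 0) :: (true, ASub 2 1) :: def) (2, 0) (2, 1)).
  - exact Hok.
  - intros σ Hσ; rewrite !Forall_cons_iff in Hσ; destruct Hσ as (Hx & Hzy & Hσ).
    apply eqV_emptyV in Hx; simpl.
    destruct (sub_one_cases _ _ (Hdef σ Hx Hσ) Hzy) as [Hz | Hz].
    + left; exact (empty_eqV _ _ Hz Hx).
    + right; exact (one_eqV _ _ Hz (Hdef σ Hx Hσ)).
  - exists (assign3 emptyV oneV oneV); split.
    + repeat apply Forall_cons; [apply eqV_refl | intros z Hz; exact Hz | apply Hwitness].
    + intros H; apply eqV_emptyV in H; exact (H tt).
  - exists (assign3 emptyV oneV emptyV); split.
    + repeat apply Forall_cons; [apply eqV_refl | intros z [[] _] | apply Hwitness].
    + intros H; apply eqV_sym, eqV_emptyV in H; exact (H tt).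
Qed.

Lemma not_convex_of_empty_factor {L : Type} (ok : L -> bool)
    (sat : assignment -> L -> Prop) (psi : list L) :
  forallb ok psi = true ->
  (forall σ, Forall (sat σ) psi -> is_empty (σ 0) /\ (is_empty (σ 1) \/ is_empty (σ 2))) ->
  Forall (sat (assign3 emptyV oneV emptyV)) psi ->
  Forall (sat (assign3 emptyV emptyV oneV)) psi ->
  ~ convex ok sat.
Proof.
  intros Hok Hcover Hy Hz.
  apply (not_convex_of_two_disjuncts ok sat psi (1, 0) (2, 0) Hok).
  - intros σ Hσ; destruct (Hcover σ Hσ) as [Hx [Hy' | Hz']];
      [left | right]; apply empty_eqV; assumption.
  - exists (assign3 emptyV oneV emptyV); split; [exact Hy |].
    intros H; apply eqV_emptyV in H; exact (H tt).
  - exists (assign3 emptyV emptyV oneV); split; [exact Hz |].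
    intros H; apply eqV_emptyV in H; exact (H tt).
Qed.

Lemma mls_not_convex_of_single (E : mls_ext) : e_single E = true -> ~ mls_convex E.
Proof.
  intros Hsingle; apply (mls_not_convex_of_one_definition E [(true, ASingle 1 0)]).
  - simpl; rewrite Hsingle; reflexivity.
  - intros σ Hx Hσ; apply Forall_cons_iff in Hσ as [Hy _].
    apply (is_one_eqV (singV (σ 0))); [apply eqV_sym, Hy | apply is_one_singV, Hx].
  - intros c; apply Forall_cons; [apply eqV_refl | apply Forall_nil].
Qed.

Lemma mls_not_convex_of_pow (E : mls_ext) : e_pow E = true -> ~ mls_convex E.
Proof.
  intros Hpow; apply (mls_not_convex_of_one_definition E [(true, APow 1 0)]).
  - simpl; rewrite Hpow; reflexivity.
  - intros σ Hx Hσ; apply Forall_cons_iff in Hσ as [Hy _].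
    apply (is_one_eqV (powV (σ 0))); [apply eqV_sym, Hy | apply is_one_powV, Hx].
  - intros c; apply Forall_cons; [| apply Forall_nil].
    apply one_eqV; [exact is_one_oneV | apply is_one_powV, is_empty_emptyV].
Qed.

Lemma mls_not_convex_of_bigunion (E : mls_ext) : e_bigu E = true -> ~ mls_convex E.
Proof.
  intros Hbigu; apply (mls_not_convex_of_one_definition E
                         [(true, ABigU 0 1); (false, AEmpty 1)]).
  - simpl; rewrite Hbigu; reflexivity.
  - intros σ Hx Hσ; rewrite !Forall_cons_iff in Hσ; destruct Hσ as (Hunion & Hy & _).
    apply is_one_of_bigunionV.
    + exact (is_empty_eqV _ _ Hunion Hx).
    + intros Hy'; apply Hy, eqV_emptyV, Hy'.
  - intros c; repeat apply Forall_cons; [| | apply Forall_nil].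
    + apply empty_eqV; [exact is_empty_emptyV | intros [[] []]].
    + intros H; apply eqV_emptyV in H; exact (H tt).
Qed.

Lemma mls_not_convex_of_product (E : mls_ext) (product : nat -> nat -> nat -> atom)
    (pair : V -> V -> V) :
  atom_ok E (product 0 1 2) = true ->
  (forall σ, sat_atom σ (product 0 1 2) = eqV (σ 0) (pair_productV pair (σ 1) (σ 2))) ->
  ~ mls_convex E.
Proof.
  intros Hok Hsat.
  apply (not_convex_of_empty_factor _ _ [(true, AEmpty 0); (true, product 0 1 2)]).
  - simpl; rewrite Hok; reflexivity.
  - intros σ Hσ; rewrite !Forall_cons_iff in Hσ; destruct Hσ as (Hx & Hprod & _).
    cbn [sat_mlit fst snd] in Hprod; rewrite Hsat in Hprod.
    apply eqV_emptyV in Hx; split; [exact Hx |].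
    apply is_empty_pair_productV with (pair := pair), (is_empty_eqV _ _ Hprod Hx).
  - repeat apply Forall_cons; try apply Forall_nil; cbn [sat_mlit fst snd];
      [apply eqV_refl | rewrite Hsat; apply empty_eqV; [exact is_empty_emptyV |]].
    apply is_empty_pair_productV; right; exact is_empty_emptyV.
  - repeat apply Forall_cons; try apply Forall_nil; cbn [sat_mlit fst snd];
      [apply eqV_refl | rewrite Hsat; apply empty_eqV; [exact is_empty_emptyV |]].
    apply is_empty_pair_productV; left; exact is_empty_emptyV.
Qed.

Lemma bst_not_convex_of_product (prod uprod : bool) (product : bterm -> bterm -> bterm)
    (pair : V -> V -> V) :
  batom_ok prod uprod (BEmpty (product (TVar 1) (TVar 2))) = true ->
  (forall σ, eval σ (product (TVar 1) (TVar 2)) = pair_productV pair (σ 1) (σ 2)) ->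
  ~ bst_convex prod uprod.
Proof.
  intros Hok Heval.
  apply (not_convex_of_empty_factor _ _
           [(true, BEmpty (TVar 0)); (true, BEmpty (product (TVar 1) (TVar 2)))]).
  - simpl in *; rewrite Hok; reflexivity.
  - intros σ Hσ; rewrite !Forall_cons_iff in Hσ; destruct Hσ as (Hx & Hprod & _).
    cbn [sat_blit sat_batom eval fst snd] in Hx, Hprod; rewrite Heval in Hprod.
    apply eqV_emptyV in Hx, Hprod; split; [exact Hx |].
    apply is_empty_pair_productV with (pair := pair), Hprod.
  - repeat apply Forall_cons; try apply Forall_nil; cbn [sat_blit sat_batom eval fst snd];
      [apply eqV_refl | rewrite Heval; apply eqV_emptyV].
    apply is_empty_pair_productV; right; exact is_empty_emptyV.
  - repeat apply Forall_cons; try apply Forall_nil; cbn [sat_blit sat_batom eval fst snd];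
      [apply eqV_refl | rewrite Heval; apply eqV_emptyV].
    apply is_empty_pair_productV; left; exact is_empty_emptyV.
Qed.

Theorem lemma14 :
  ~ mls_convex MLSS /\ ~ mls_convex MLSP /\ ~ mls_convex MLSSP /\
  ~ mls_convex MLSU /\ ~ mls_convex MLSx /\ ~ mls_convex MLSo /\
  ~ bst_convex true false /\ ~ bst_convex false true.
Proof.
  repeat split.
  - exact (mls_not_convex_of_single MLSS eq_refl).
  - exact (mls_not_convex_of_pow MLSP eq_refl).
  - exact (mls_not_convex_of_single MLSSP eq_refl).
  - exact (mls_not_convex_of_bigunion MLSU eq_refl).
  - exact (mls_not_convex_of_product MLSx AProd opairV eq_refl (fun σ => eq_refl)).
  - exact (mls_not_convex_of_product MLSo AUProd upairV eq_refl (fun σ => eq_refl)).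
  - exact (bst_not_convex_of_product true false TProd opairV eq_refl (fun σ => eq_refl)).
  - exact (bst_not_convex_of_product false true TUProd upairV eq_refl (fun σ => eq_refl)).
Qed.
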